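(* Let $T>0$, $\alpha>0$, $\beta>0$, $\sigma>0$, $u_1>0$, let $N$ be a positive integer, and consider the optimal control problem $$\int_0^T\big(\alpha R(t)+\beta u(t)\big)\,dt\to\inf,\qquad \dot R=-uR+N\sigma^2,\qquad R(0)=R_0,\qquad 0\le u(t)\le u_1,$$ with Pontryagin Hamiltonian $H(R,\psi,u)=-(\alpha R+\beta u)+\psi(-uR+N\sigma^2)=H_0(R,\psi)+uH_1(R,\psi)$, where $H_0=-\alpha R+N\sigma^2\psi$ and $H_1=-\beta-R\psi$, and Hamiltonian system $\dot\psi=\alpha+u\psi$, $\dot R=-uR+N\sigma^2$. Suppose $\sqrt{\alpha N\sigma^2/\beta}\le u_1$. Then $$\hat R_s(t)\equiv\sqrt{N\sigma^2\beta/\alpha},\qquad \psi_s(t)\equiv-\sqrt{\alpha\beta/(N\sigma^2)}$$ is a singular extremal of order $1$, and the corresponding singular control is $u_s=\sqrt{\alpha N\sigma^2/\beta}$.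
   Context: An extremal is a solution $(R(t),\psi(t))$ of the Hamiltonian system with $u=u(t)\in[0,u_1]$ satisfying the maximum condition $H(R(t),\psi(t),u(t))=\max_{0\le v\le u_1}H(R(t),\psi(t),v)$. An extremal on an interval $(t_1,t_2)$ is singular if the switching function vanishes identically there: $H_1(R(t),\psi(t))=0$ for all $t\in(t_1,t_2)$. A singular extremal has order $q$ if $\frac{\partial}{\partial u}\frac{d^k}{dt^k}H_1(R,\psi)=0$ for $k=0,\dots,2q-1$ and $\frac{\partial}{\partial u}\frac{d^{2q}}{dt^{2q}}H_1(R,\psi)\ne0$ in a neighbourhood of the trajectory, where time derivatives are computed along the Hamiltonian system. *)

From HB Require Import structures.
From mathcomp Require Import all_boot all_order all_algebra.
From mathcomp Require Import all_classical all_reals all_analysis.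
Set Implicit Arguments. Unset Strict Implicit. Unset Printing Implicit Defensive.
Import Order.TTheory GRing.Theory Num.Theory.
Import numFieldNormedType.Exports.
Local Open Scope ring_scope.

Section OCP.
Variables (R : realType) (alpha beta sigma u1 : R) (N : nat).

Definition Ham (x p v : R) : R :=
  - (alpha * x + beta * v) + p * (- v * x + N%:R * sigma ^+ 2).
Definition H0 (x p : R) : R := - alpha * x + N%:R * sigma ^+ 2 * p.
Definition H1 (x p : R) : R := - beta - x * p.

Definition fR (x p v : R) : R := - v * x + N%:R * sigma ^+ 2.
Definition fpsi (x p v : R) : R := alpha + v * p.

Definition is_extremal (Rt psi u : R -> R) (t1 t2 : R) : Prop :=
  forall t, t1 < t < t2 ->
    [/\ is_derive t 1 Rt (fR (Rt t) (psi t) (u t)),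
        is_derive t 1 psi (fpsi (Rt t) (psi t) (u t)),
        0 <= u t <= u1 &
        forall v, 0 <= v <= u1 -> Ham (Rt t) (psi t) v <= Ham (Rt t) (psi t) (u t)].

Definition is_singular (Rt psi : R -> R) (t1 t2 : R) : Prop :=
  forall t, t1 < t < t2 -> H1 (Rt t) (psi t) = 0.

(* Total time derivative along the Hamiltonian system of a function
   F(x,p,v) of the state, costate and (frozen) control variable:
   d/dt F = dF/dx * fR + dF/dp * fpsi;  Dt k F is the k-th such derivative. *)
Fixpoint Dt (k : nat) (F : R -> R -> R -> R) : R -> R -> R -> R :=
  match k with
  | 0%N => F
  | k'.+1 => fun x p v =>
      derive1 (fun y => Dt k' F y p v) x * fR x p v
      + derive1 (fun y => Dt k' F x y v) p * fpsi x p v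
  end.

Definition dU (G : R -> R -> R -> R) (x p v : R) : R := derive1 (fun w => G x p w) v.

Definition H1u (x p v : R) : R := H1 x p.

Definition singular_order (Rt psi : R -> R) (t1 t2 : R) (q : nat) : Prop :=
  forall t, t1 < t < t2 ->
    \forall z \near (Rt t, psi t),
      (forall k, (k < 2 * q)%N -> forall v, dU (Dt k H1u) z.1 z.2 v = 0)
      /\ (forall v, dU (Dt (2 * q) H1u) z.1 z.2 v != 0).

End OCP.

From HB Require Import structures.
From mathcomp Require Import all_boot all_order all_algebra.
From mathcomp Require Import all_classical all_reals all_analysis.
From mathcomp Require Import ring lra.
Set Implicit Arguments. Unset Strict Implicit. Unset Printing Implicit Defensive.
Import Order.TTheory GRing.Theory Num.Theory.
Import numFieldNormedType.Exports.
Local Open Scope ring_scope.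

(* The Hamiltonian is affine in the control, H = H0 + u H1, so along a trajectory
   on which H1 vanishes the maximum condition holds for every admissible control.
   At the stationary point where H1 = 0, dR/dt = 0 and dpsi/dt = 0, all three
   conditions are met by a constant trajectory.  The time derivatives of H1 are
   affine in (R, psi), and only the second one depends on u, with coefficient
   alpha R - N sigma^2 psi; this is nonzero at the stationary point, hence near
   it, which gives order 1. *)

Lemma derive1_affine (R : realType) (f : R -> R) (a b x : R) :
  f = (fun y => a + b * y) -> derive1 f x = b.
Proof.
move=> ->; rewrite derive1E; apply: derive_val; apply: is_derive_eq.
by rewrite add0r mul1r /GRing.scale /= mulr1.
Qed.

Lemma near_neq0_affine2 (R : realType) (a b x0 p0 : R) :
  a * x0 + b * p0 != 0 -> \forall z \near (x0, p0), a * z.1 + b * z.2 != 0.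
Proof.
have lim : ((fun z : R * R => a * z.1 + b * z.2) @ (x0, p0) --> a * x0 + b * p0)%classic.
  by apply: cvgD; apply: cvgM; [exact: cvg_cst | exact: cvg_fst | exact: cvg_cst | exact: cvg_snd].
exact: cvgr_neq0 lim.
Qed.

Lemma sqrtrM_sqr (R : rcfType) (x y k : R) :
  0 <= x -> 0 <= k -> x * y = k ^+ 2 -> Num.sqrt x * Num.sqrt y = k.
Proof. by move=> x0 k0 xyk; rewrite -sqrtrM // xyk sqrtr_sqr ger0_norm. Qed.

Section ConstantSingularExtremal.
Variables (R : realType) (alpha beta sigma u1 : R) (N : nat).

Local Notation c := (N%:R * sigma ^+ 2).
Local Notation Dt := (Dt alpha sigma N).
Local Notation H1u := (H1u beta).

Lemma Ham_affine_control (x p v : R) :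
  Ham alpha beta sigma N x p v = H0 alpha sigma N x p + v * H1 beta x p.
Proof. by rewrite /Ham /H0 /H1; ring. Qed.

Lemma DtS (k : nat) (F : R -> R -> R -> R) (x p v : R) :
  Dt k.+1 F x p v = derive1 (fun y => Dt k F y p v) x * fR sigma N x p v
                    + derive1 (fun y => Dt k F x y v) p * fpsi alpha x p v.
Proof. by []. Qed.

Lemma Dt1_H1u (x p v : R) : Dt 1 H1u x p v = - (c * p) - alpha * x.
Proof.
rewrite DtS /= /H1u /H1 (@derive1_affine _ _ (- beta) (- p)); last first.
  by apply/funext => y; ring.
rewrite (@derive1_affine _ _ (- beta) (- x)); last by apply/funext => y; ring.
by rewrite /fR /fpsi; ring.
Qed.

Lemma Dt2_H1u (x p v : R) :
  Dt 2 H1u x p v = - (alpha * c) - c * alpha + (alpha * x - c * p) * v.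
Proof.
rewrite DtS (@derive1_affine _ _ (- (c * p)) (- alpha)); last first.
  by apply/funext => y; rewrite Dt1_H1u; ring.
rewrite (@derive1_affine _ _ (- (alpha * x)) (- c)); last first.
  by apply/funext => y; rewrite Dt1_H1u; ring.
by rewrite /fR /fpsi; ring.
Qed.

Lemma dU_Dt_H1u_lt2 (k : nat) (x p v : R) : (k < 2)%N -> dU (Dt k H1u) x p v = 0.
Proof.
case: k => [|[|//]] _; rewrite /dU.
  by apply: (@derive1_affine _ _ (H1 beta x p)); apply/funext => w; rewrite mul0r addr0.
apply: (@derive1_affine _ _ (- (c * p) - alpha * x)).
by apply/funext => w; rewrite Dt1_H1u mul0r addr0.
Qed.

Lemma dU_Dt2_H1u (x p v : R) : dU (Dt 2 H1u) x p v = alpha * x - c * p.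
Proof. by apply: derive1_affine; apply/funext => w; rewrite Dt2_H1u. Qed.

Variables (x0 p0 u0 : R).
Hypotheses (H1_eq0 : H1 beta x0 p0 = 0)
  (fR_eq0 : fR sigma N x0 p0 u0 = 0) (fpsi_eq0 : fpsi alpha x0 p0 u0 = 0)
  (u0_admissible : 0 <= u0 <= u1) (dU_Dt2_neq0 : alpha * x0 - c * p0 != 0).

Lemma cst_is_extremal (t1 t2 : R) :
  is_extremal alpha beta sigma u1 N (cst x0) (cst p0) (cst u0) t1 t2.
Proof.
move=> t _; split => //=.
- by rewrite fR_eq0; exact: is_derive_cst.
- by rewrite fpsi_eq0; exact: is_derive_cst.
- by move=> v _; rewrite !Ham_affine_control H1_eq0 !mulr0.
Qed.

Lemma cst_is_singular (t1 t2 : R) : is_singular beta (cst x0) (cst p0) t1 t2.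
Proof. by []. Qed.

Lemma cst_singular_order1 (t1 t2 : R) :
  singular_order alpha beta sigma N (cst x0) (cst p0) t1 t2 1.
Proof.
move=> t _; have := @near_neq0_affine2 R alpha (- c) x0 p0.
rewrite mulNr => /(_ dU_Dt2_neq0).
apply: filterS => z; rewrite mulNr => z_neq0; split.
  by move=> k; rewrite muln1 => k_lt2 v; exact: dU_Dt_H1u_lt2.
by move=> v; rewrite muln1 dU_Dt2_H1u.
Qed.

End ConstantSingularExtremal.

Theorem lemma2 (R : realType) (T alpha beta sigma u1 : R) (N : nat) :
  0 < T -> 0 < alpha -> 0 < beta -> 0 < sigma -> 0 < u1 -> (0 < N)%N ->
  Num.sqrt (alpha * N%:R * sigma ^+ 2 / beta) <= u1 ->
  let Rs := fun _ : R => Num.sqrt (N%:R * sigma ^+ 2 * beta / alpha) in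
  let psis := fun _ : R => - Num.sqrt (alpha * beta / (N%:R * sigma ^+ 2)) in
  let us := fun _ : R => Num.sqrt (alpha * N%:R * sigma ^+ 2 / beta) in
  is_extremal alpha beta sigma u1 N Rs psis us 0 T /\
  is_singular beta Rs psis 0 T /\
  singular_order alpha beta sigma N Rs psis 0 T 1.
Proof.
move=> _ a_gt0 b_gt0 s_gt0 _ N_gt0 us_le_u1 Rs psis us.
rewrite {}/Rs {}/psis {}/us.
set u0 := Num.sqrt (alpha * N%:R * sigma ^+ 2 / beta) in us_le_u1 *.
set c := N%:R * sigma ^+ 2; have c_gt0 : 0 < c by rewrite mulr_gt0 ?ltr0n ?exprn_gt0.
set x0 := Num.sqrt (c * beta / alpha); set q := Num.sqrt (alpha * beta / c).
have u0E : u0 = Num.sqrt (alpha * c / beta) by rewrite /u0 /c mulrA.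
have ge0 (y z w : R) : 0 < y -> 0 < z -> 0 < w -> 0 <= y * z / w.
  by move=> *; rewrite ltW ?divr_gt0 ?mulr_gt0.
have u0x0 : u0 * x0 = c.
  by rewrite u0E (@sqrtrM_sqr _ _ _ c) ?ge0 ?ltW //; field; rewrite ?gt_eqF.
have u0q : u0 * q = alpha.
  by rewrite u0E (@sqrtrM_sqr _ _ _ alpha) ?ge0 ?ltW //; field; rewrite ?gt_eqF.
have x0q : x0 * q = beta.
  by rewrite (@sqrtrM_sqr _ _ _ beta) ?ge0 ?ltW //; field; rewrite ?gt_eqF.
have x0_gt0 : 0 < x0 by rewrite sqrtr_gt0 (divr_gt0 (mulr_gt0 c_gt0 b_gt0)).
have q_gt0 : 0 < q by rewrite sqrtr_gt0 (divr_gt0 (mulr_gt0 a_gt0 b_gt0)).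
have H1_eq0 : H1 beta x0 (- q) = 0 by rewrite /H1 mulrN x0q; ring.
have fR_eq0 : fR sigma N x0 (- q) u0 = 0 by rewrite /fR -/c mulNr u0x0 addNr.
have fpsi_eq0 : fpsi alpha x0 (- q) u0 = 0 by rewrite /fpsi mulrN u0q subrr.
have u0_adm : 0 <= u0 <= u1 by rewrite sqrtr_ge0 us_le_u1.
have dU_neq0 : alpha * x0 - c * - q != 0.
  by rewrite mulrN opprK gt_eqF // addr_gt0 // mulr_gt0.
split; first exact: (cst_is_extremal H1_eq0 fR_eq0 fpsi_eq0 u0_adm).
split; first exact: (cst_is_singular H1_eq0).
exact: (cst_singular_order1 beta dU_neq0).
Qed.
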